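(* Let $\mathcal{G}$ be a groupoid and $\mathbb{K}$ a field. A map $\sigma :\mathcal{G} \times\mathcal{G} \to \mathbb{K}$ such that $\sigma(e,e) = 1$ for all $e \in \mathcal{G}_0$ is an idempotent factor set (i.e. an idempotent element of $pm(\mathcal{G})$) if and only if its values are $0$ and $1$ and for all $(x,y)\in\mathrm{dom}\,\sigma$, $$(xy,y^{-1}),\ (y^{-1},x^{-1}),\ (x,d(x)) \in \mathrm{dom}\,\sigma.$$
   Context: A groupoid is a nonempty set $\mathcal{G}$ with a partial associative product, each $g$ having right identity $d(g)=g^{-1}g$, left identity $r(g)=gg^{-1}$ and inverse $g^{-1}$; $xy$ is defined ($\exists xy$) iff $d(x)=r(y)$; $\mathcal{G}_0$ identities, $\mathcal{G}^2$ composable pairs. A $\mathbb{K}$-semigroup is a semigroup $S$ with zero with scalar action satisfying $\alpha(\beta x)=(\alpha\beta)x$, $1x=x$, $\alpha(xy)=(\alpha x)y=x(\alpha y)$, $0x=0$; $\mathbb{K}$-cancellative if $\alpha x=\beta x$, $x\ne0$ imply $\alpha=\beta$. With $\xi:S\to S/\lambda$ the quotient by $x\lambda y\iff x=\alpha y$ for some $\alpha\in\mathbb{K}^*$, a partial projective representation of $\mathcal{G}$ on a $\mathbb{K}$-cancellative semigroup $S$ is $\Gamma:\mathcal{G}\to S$ such that whenever $\exists xy$: $\xi\Gamma(x^{-1})\xi\Gamma(x)\xi\Gamma(y)=\xi\Gamma(x^{-1})\xi\Gamma(xy)$ and $\xi\Gamma(x)\xi\Gamma(y)\xi\Gamma(y^{-1})=\xi\Gamma(xy)\xi\Gamma(y^{-1})$.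 Standing assumption: $\Gamma(r(x))\Gamma(x)=\Gamma(x)=\Gamma(x)\Gamma(d(x))$ for all $x$. Its factor set is the unique partial map $\sigma$ with domain $\{(x,y)\in\mathcal{G}^2:\Gamma(x)\Gamma(y)\ne0\}$, values in $\mathbb{K}^*$, satisfying $\Gamma(x^{-1})\Gamma(x)\Gamma(y)=\Gamma(x^{-1})\Gamma(xy)\sigma(x,y)$ and $\Gamma(x)\Gamma(y)\Gamma(y^{-1})=\Gamma(xy)\Gamma(y^{-1})\sigma(x,y)$ on its domain; it is regarded as a map $\mathcal{G}\times\mathcal{G}\to\mathbb{K}$ by setting it $0$ outside its domain, so $\mathrm{dom}\,\sigma=\{(x,y):\sigma(x,y)\neq0\}$. $pm(\mathcal{G})$ is the set of all such factor sets, a commutative semigroup under pointwise multiplication. *)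

From HB Require Import structures.
From mathcomp Require Import all_boot all_algebra.
Set Implicit Arguments. Unset Strict Implicit. Unset Printing Implicit Defensive.
Import GRing.Theory.
Local Open Scope ring_scope.

(* A groupoid: nonempty carrier with a product (meaningful only on composable
   pairs) and an inverse.  d x := x^{-1} x, r x := x x^{-1}, and the product
   x y is defined iff d x = r y. *)
Record groupoid : Type := Groupoid {
  gcar :> Type;
  gpt : gcar;
  gmul : gcar -> gcar -> gcar;
  ginv : gcar -> gcar;
  ginvK : forall x, ginv (ginv x) = x;
  gassoc : forall x y z, gmul (ginv x) x = gmul y (ginv y) ->
     gmul (ginv y) y = gmul z (ginv z) ->
     gmul (gmul x y) z = gmul x (gmul y z);
  gd_mul : forall x y, gmul (ginv x) x = gmul y (ginv y) ->
     gmul (ginv (gmul x y)) (gmul x y) = gmul (ginv y) y;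
  gr_mul : forall x y, gmul (ginv x) x = gmul y (ginv y) ->
     gmul (gmul x y) (ginv (gmul x y)) = gmul x (ginv x);
  gr_d : forall x, let e := gmul (ginv x) x in gmul e (ginv e) = e;
  gd_r : forall x, let e := gmul x (ginv x) in gmul (ginv e) e = e;
  gmul_d : forall x, gmul x (gmul (ginv x) x) = x;
  gr_mul_x : forall x, gmul (gmul x (ginv x)) x = x;
  gcancel_l : forall x y, gmul (ginv x) x = gmul y (ginv y) ->
     gmul (ginv x) (gmul x y) = y;
  gcancel_r : forall x y, gmul (ginv x) x = gmul y (ginv y) ->
     gmul (gmul x y) (ginv y) = x
}.

Section GroupoidDefs.
Variable G : groupoid.
Definition gd (x : G) : G := gmul (ginv x) x.
Definition gr (x : G) : G := gmul x (ginv x).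
Definition composable (x y : G) : Prop := gd x = gr y.
Definition identity_elt (e : G) : Prop := exists x : G, e = gd x.
End GroupoidDefs.

Record ksemigroup (K : fieldType) : Type := KSemigroup {
  scar :> Type;
  smul : scar -> scar -> scar;
  szero : scar;
  sscale : K -> scar -> scar;
  smulA : forall x y z, smul (smul x y) z = smul x (smul y z);
  smul0l : forall x, smul szero x = szero;
  smul0r : forall x, smul x szero = szero;
  sscaleA : forall (a b : K) x, sscale a (sscale b x) = sscale (a * b) x;
  sscale1 : forall x, sscale 1 x = x;
  sscale_mull : forall (a : K) x y, sscale a (smul x y) = smul (sscale a x) y;
  sscale_mulr : forall (a : K) x y, sscale a (smul x y) = smul x (sscale a y);
  sscale0 : forall x, sscale 0 x = szero
}.

Definition kcancellative (K : fieldType) (S : ksemigroup K) : Prop :=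
  forall (a b : K) (x : S), sscale a x = sscale b x -> x <> szero S -> a = b.

(* x lambda y  iff  x = alpha y for some nonzero alpha; xi is the quotient map
   S -> S/lambda, which is a semigroup morphism, so
   xi u xi v xi w = xi u xi z  iff  (u v w) lambda (u z). *)
Definition klambda (K : fieldType) (S : ksemigroup K) (x y : S) : Prop :=
  exists a : K, a != 0 /\ x = sscale a y.

Section Reps.
Variables (K : fieldType) (G : groupoid) (S : ksemigroup K).
Local Notation "x ** y" := (smul x y) (at level 40, left associativity).

Definition partial_proj_rep (Gam : G -> S) : Prop :=
  forall x y : G, composable x y ->
    klambda (Gam (ginv x) ** Gam x ** Gam y) (Gam (ginv x) ** Gam (gmul x y)) /\
    klambda (Gam x ** Gam y ** Gam (ginv y)) (Gam (gmul x y) ** Gam (ginv y)).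

Definition standing_assumption (Gam : G -> S) : Prop :=
  forall x : G, Gam (gr x) ** Gam x = Gam x /\ Gam x ** Gam (gd x) = Gam x.

(* sigma is the factor set of Gam, viewed as a total map G x G -> K that is
   0 outside its domain {(x,y) in G^2 : Gam x Gam y <> 0}. *)
Definition factor_set_of (Gam : G -> S) (sigma : G -> G -> K) : Prop :=
  (forall x y : G, sigma x y != 0 <-> (composable x y /\ Gam x ** Gam y <> szero S)) /\
  (forall x y : G, composable x y -> Gam x ** Gam y <> szero S ->
     Gam (ginv x) ** Gam x ** Gam y = sscale (sigma x y) (Gam (ginv x) ** Gam (gmul x y)) /\
     Gam x ** Gam y ** Gam (ginv y) = sscale (sigma x y) (Gam (gmul x y) ** Gam (ginv y))).
End Reps.

Definition in_pm (K : fieldType) (G : groupoid) (sigma : G -> G -> K) : Prop :=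
  exists (S : ksemigroup K) (Gam : G -> S),
    kcancellative S /\ partial_proj_rep Gam /\ standing_assumption Gam /\
    factor_set_of Gam sigma.

(* idempotent element of the commutative semigroup pm(G) (pointwise product) *)
Definition idempotent_factor_set (K : fieldType) (G : groupoid) (sigma : G -> G -> K) : Prop :=
  in_pm sigma /\ (forall x y : G, sigma x y * sigma x y = sigma x y).

Definition in_dom (K : fieldType) (G : groupoid) (sigma : G -> G -> K) (x y : G) : Prop :=
  sigma x y != 0.

(* Necessity: in a partial projective representation, Γ(y) Γ(y⁻¹) Γ(y) is a nonzero
   multiple of Γ(y), so a nonzero product Γ(x) Γ(y) stays nonzero when Γ(y⁻¹) is
   multiplied on the right, or Γ(x⁻¹) on the left; via the representation identities
   this makes Γ(xy) Γ(y⁻¹), Γ(x⁻¹) Γ(xy) and then Γ(y⁻¹) Γ(x⁻¹) nonzero.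

   Sufficiency: realise σ on K^* times a semigroup of cells (A, g), A a set of arrows
   with range r(g), multiplied by (A, g) (B, h) = (A ∪ gB, gh) and truncated to 0
   unless A ∪ gB is consistent, i.e. σ(a⁻¹b, b⁻¹c) ≠ 0 for all a, b, c in it. Factors
   of a consistent product are consistent, so this is associative. For
   Γ(x) = ({r(x), x}, x) the products appearing in the representation identities are
   equal on the nose, and Γ(x) Γ(y) = ({r(x), x, xy}, xy): the closure conditions on
   dom σ make the triangle condition invariant under permuting and collapsing a, b, c,
   so this set is consistent exactly when σ(x, y) ≠ 0. *)

From mathcomp Require Import all_boot all_algebra.
From mathcomp Require Import boolp classical_sets.
Set Implicit Arguments. Unset Strict Implicit. Unset Printing Implicit Defensive.
Import GRing.Theory.
Local Open Scope ring_scope.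

Section GroupoidTheory.
Variable G : groupoid.
Implicit Types x y z a b c : G.

Lemma gr_ginv x : gr (ginv x) = gd x. Proof. by rewrite /gr /gd ginvK. Qed.
Lemma gd_ginv x : gd (ginv x) = gr x. Proof. by rewrite /gr /gd ginvK. Qed.
Lemma gr_gd x : gr (gd x) = gd x. Proof. exact: gr_d. Qed.
Lemma gd_gr x : gd (gr x) = gr x. Proof. exact: gd_r. Qed.
Lemma gr_gr x : gr (gr x) = gr x. Proof. by rewrite -[gr x]gd_ginv gr_gd. Qed.
Lemma gd_gd x : gd (gd x) = gd x. Proof. by rewrite -[gd x]gr_ginv gd_gr. Qed.
Lemma gmul_gd x : gmul x (gd x) = x. Proof. exact: gmul_d. Qed.
Lemma gmul_gr x : gmul (gr x) x = x. Proof. exact: gr_mul_x. Qed.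

Lemma ginv_gd x : ginv (gd x) = gd x.
Proof. by rewrite -[LHS]gmul_gd gd_ginv gr_gd -/(gd (gd x)) gd_gd. Qed.

Lemma ginv_gr x : ginv (gr x) = gr x. Proof. by rewrite -gd_ginv ginv_gd. Qed.

Lemma composable_ginvl x : composable (ginv x) x. Proof. exact: gd_ginv. Qed.
Lemma composable_ginvr x : composable x (ginv x). Proof. by rewrite /composable gr_ginv. Qed.
Lemma composable_gr x : composable (gr x) x. Proof. exact: gd_gr. Qed.
Lemma composable_gd x : composable x (gd x). Proof. by rewrite /composable gr_gd. Qed.

Lemma composable_ginv x y : composable x y -> composable (ginv y) (ginv x).
Proof. by rewrite /composable gd_ginv gr_ginv. Qed.

Lemma composable_ginv_gr a b : composable (ginv a) b = (gr a = gr b).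
Proof. by rewrite /composable gd_ginv. Qed.

Lemma gd_gmul x y : composable x y -> gd (gmul x y) = gd y. Proof. exact: gd_mul. Qed.
Lemma gr_gmul x y : composable x y -> gr (gmul x y) = gr x. Proof. exact: gr_mul. Qed.

Lemma composable_mull x y z : composable x y -> composable (gmul x y) z = composable y z.
Proof. by move=> xy; rewrite /composable gd_gmul. Qed.

Lemma composable_mulr x y z : composable y z -> composable x (gmul y z) = composable x y.
Proof. by move=> yz; rewrite /composable gr_gmul. Qed.

Lemma gmulA x y z : composable x y -> composable y z ->
  gmul (gmul x y) z = gmul x (gmul y z).
Proof. exact: gassoc. Qed.

Lemma gmulKg x y : composable x y -> gmul (ginv x) (gmul x y) = y.
Proof. exact: gcancel_l. Qed.

Lemma gmulKVg x y : composable (ginv x) y -> gmul x (gmul (ginv x) y) = y.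
Proof. by move=> h; rewrite -{1}[x]ginvK gmulKg. Qed.

Lemma gmulgK x y : composable x y -> gmul (gmul x y) (ginv y) = x.
Proof. exact: gcancel_r. Qed.

Lemma gmul_grl x y : composable x y -> gmul x (gr y) = x.
Proof. by move=> <-; rewrite gmul_gd. Qed.

Lemma ginvM x y : composable x y -> ginv (gmul x y) = gmul (ginv y) (ginv x).
Proof.
move=> xy; have y'x' := composable_ginv xy.
have xy_y' : composable (gmul x y) (ginv y).
  by rewrite composable_mull //; apply: composable_ginvr.
have xy_y'x' : gmul (gmul x y) (gmul (ginv y) (ginv x)) = gr (gmul x y).
  by rewrite -gmulA // gmulgK // gr_gmul.
rewrite -[ginv _]gmul_gd gd_ginv -xy_y'x' gmulKg //.
by rewrite composable_mull // composable_mulr //; apply: composable_ginvr.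
Qed.

Lemma ginv_ldiv a b : gr a = gr b -> ginv (gmul (ginv a) b) = gmul (ginv b) a.
Proof. by rewrite -composable_ginv_gr => ab; rewrite ginvM // ginvK. Qed.

Lemma gmul_ldiv a b c : gr a = gr b -> gr b = gr c ->
  gmul (gmul (ginv a) b) (gmul (ginv b) c) = gmul (ginv a) c.
Proof.
rewrite -!composable_ginv_gr => ab bc.
by rewrite gmulA // ?gmulKVg // composable_mulr //; apply: composable_ginvr.
Qed.

Lemma ldiv_gmul2l x a b : composable x a -> composable x b ->
  gmul (ginv (gmul x a)) (gmul x b) = gmul (ginv a) b.
Proof.
move=> xa xb; rewrite ginvM // gmulA ?gmulKg //; first exact: composable_ginv.
by rewrite composable_mulr //; apply: composable_ginvl.
Qed.

End GroupoidTheory.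

Definition dom_closed (G : groupoid) (K : fieldType) (sigma : G -> G -> K) : Prop :=
  forall x y : G, in_dom sigma x y ->
    composable x y /\ in_dom sigma (gmul x y) (ginv y) /\
    in_dom sigma (ginv y) (ginv x) /\ in_dom sigma x (gd x).

Section KSemigroupTheory.
Variables (K : fieldType) (S : ksemigroup K).
Local Notation "x ** y" := (smul x y) (at level 40, left associativity).
Local Notation O := (szero S).
Implicit Types X Y Z : S.

Lemma sscale_zero (a : K) : sscale a O = O.
Proof. by have := sscale_mull a O O; rewrite !smul0r. Qed.

Lemma sscale_eq0 (a : K) X : a != 0 -> (sscale a X = O) <-> (X = O).
Proof.
move=> a_neq0; split=> [aX0|->]; last exact: sscale_zero.
by rewrite -(sscale1 X) -(mulVf a_neq0) -sscaleA aX0 sscale_zero.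
Qed.

Lemma klambda_eq0 X Y : klambda X Y -> (X = O <-> Y = O).
Proof. by case=> a [a_neq0 ->]; apply: sscale_eq0. Qed.

Lemma klambda_mull X Y Z : klambda X Y -> klambda (Z ** X) (Z ** Y).
Proof. by case=> a [a_neq0 ->]; exists a; rewrite sscale_mulr. Qed.

Lemma klambda_mulr X Y Z : klambda X Y -> klambda (X ** Z) (Y ** Z).
Proof. by case=> a [a_neq0 ->]; exists a; rewrite sscale_mull. Qed.

Lemma smul_neq0l X Y : X ** Y <> O -> X <> O.
Proof. by move=> XY0 X0; apply: XY0; rewrite X0 smul0l. Qed.

End KSemigroupTheory.

Section ProjectiveRepresentation.
Variables (K : fieldType) (G : groupoid) (S : ksemigroup K) (Gam : G -> S).
Hypotheses (Gam_rep : partial_proj_rep Gam) (Gam_unit : standing_assumption Gam).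
Local Notation "x ** y" := (smul x y) (at level 40, left associativity).
Local Notation O := (szero S).

Lemma rep_sandwich y : klambda (Gam y ** Gam (ginv y) ** Gam y) (Gam y).
Proof.
have [_] := Gam_rep (composable_ginvr y).
by rewrite ginvK -/(gr y) (Gam_unit y).1.
Qed.

Lemma rep_mul_ginvr_neq0 x y : composable x y -> Gam x ** Gam y <> O ->
  Gam (gmul x y) ** Gam (ginv y) <> O.
Proof.
move=> xy nz; apply/(klambda_eq0 (Gam_rep xy).2) => E; apply: nz.
apply/(klambda_eq0 (klambda_mull (Gam x) (rep_sandwich y))).
by rewrite -!smulA E smul0l.
Qed.

Lemma rep_ginvl_mul_neq0 x y : composable x y -> Gam x ** Gam y <> O ->
  Gam (ginv x) ** Gam (gmul x y) <> O.
Proof.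
move=> xy nz; apply/(klambda_eq0 (Gam_rep xy).1) => E; apply: nz.
apply/(klambda_eq0 (klambda_mulr (Gam y) (rep_sandwich x))).
by rewrite smulA in E; rewrite !smulA E smul0r.
Qed.

Lemma rep_ginv_mul_neq0 x y : composable x y -> Gam x ** Gam y <> O ->
  Gam (ginv y) ** Gam (ginv x) <> O.
Proof.
move=> xy nz.
have xy_y' : composable (gmul x y) (ginv y).
  by rewrite composable_mull //; apply: composable_ginvr.
have := rep_ginvl_mul_neq0 xy_y' (rep_mul_ginvr_neq0 xy nz).
rewrite gmulgK // ginvM // => nz'.
have [_] := Gam_rep (composable_ginv xy); rewrite ginvK => lam.
apply: (smul_neq0l (Y := Gam x)) => E; apply: nz'.
exact/(klambda_eq0 lam).
Qed.

Lemma factor_set_dom_closed (sigma : G -> G -> K) :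
  factor_set_of Gam sigma -> dom_closed sigma.
Proof.
case=> dom_sigma _ x y /dom_sigma[xy nz].
split=> //; split; [|split]; apply/dom_sigma; split.
- by rewrite composable_mull //; apply: composable_ginvr.
- exact: rep_mul_ginvr_neq0.
- exact: composable_ginv.
- exact: rep_ginv_mul_neq0.
- exact: composable_gd.
- by rewrite (Gam_unit x).2; apply: smul_neq0l nz.
Qed.

End ProjectiveRepresentation.

Section Linearization.
Variables (K : fieldType) (M : Type) (mulM : M -> M -> option M).

Definition omul (u v : option M) : option M :=
  if (u, v) is (Some p, Some q) then mulM p q else None.

Hypothesis mulMA : forall p q r, omul (mulM p q) (Some r) = omul (Some p) (mulM q r).

Definition nzscalar := {a : K | a != 0}.

Definition nzmul (a b : nzscalar) : nzscalar :=
  exist _ (val a * val b) (mulf_neq0 (valP a) (valP b)).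

Definition nzone : nzscalar := exist _ 1 (oner_neq0 K).

Lemma nzmulA : associative nzmul.
Proof. by move=> a b c; apply: val_inj; rewrite /= mulrA. Qed.

Definition lin_mul (u v : option (nzscalar * M)) : option (nzscalar * M) :=
  if (u, v) is (Some (a, p), Some (b, q)) then omap (pair (nzmul a b)) (mulM p q)
  else None.

Definition lin_scale (c : K) (u : option (nzscalar * M)) : option (nzscalar * M) :=
  if u is Some (a, p) then omap (fun c' => (nzmul c' a, p)) (insub c) else None.

Lemma lin_mul0l u : lin_mul None u = None.
Proof. by []. Qed.

Lemma lin_mul0r u : lin_mul u None = None.
Proof. by case: u => [[]|]. Qed.

Lemma lin_mulA u v w : lin_mul (lin_mul u v) w = lin_mul u (lin_mul v w).
Proof.
case: u v w => [[a p]|] [[b q]|] [[c r]|]; rewrite ?lin_mul0r //.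
have -> : lin_mul (lin_mul (Some (a, p)) (Some (b, q))) (Some (c, r)) =
          omap (pair (nzmul (nzmul a b) c)) (omul (mulM p q) (Some r)).
  by rewrite /lin_mul /omul; case: (mulM p q).
have -> : lin_mul (Some (a, p)) (lin_mul (Some (b, q)) (Some (c, r))) =
          omap (pair (nzmul a (nzmul b c))) (omul (Some p) (mulM q r)).
  by rewrite /lin_mul /omul; case: (mulM q r).
by rewrite mulMA nzmulA.
Qed.

Lemma insub_nzscalar c (c_neq0 : c != 0) : insub c = Some (exist _ c c_neq0 : nzscalar).
Proof. exact: insubT. Qed.

Lemma lin_scaleA a b u : lin_scale a (lin_scale b u) = lin_scale (a * b) u.
Proof.
case: u => [[c p]|] //=.
have [->|b_neq0] := eqVneq b 0; first by rewrite mulr0 insubF ?eqxx.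
rewrite (insub_nzscalar b_neq0) /=.
have [->|a_neq0] := eqVneq a 0; first by rewrite mul0r insubF ?eqxx.
rewrite (insub_nzscalar a_neq0) (insub_nzscalar (mulf_neq0 a_neq0 b_neq0)) /=.
by congr (Some (_, _)); apply: val_inj; rewrite /= mulrA.
Qed.

Lemma lin_scale1 u : lin_scale 1 u = u.
Proof.
case: u => [[a p]|] //=; rewrite (insub_nzscalar (oner_neq0 K)) /=.
by congr (Some (_, _)); apply: val_inj; rewrite /= mul1r.
Qed.

Lemma lin_scale0 u : lin_scale 0 u = None.
Proof. by case: u => [[]|] //= *; rewrite insubF ?eqxx. Qed.

Lemma lin_scale_mull c u v : lin_scale c (lin_mul u v) = lin_mul (lin_scale c u) v.
Proof.
have [->|c_neq0] := eqVneq c 0; first by rewrite !lin_scale0.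
case: u => [[a p]|] //; case: v => [[b q]|]; rewrite ?lin_mul0r //.
rewrite /lin_scale /lin_mul (insub_nzscalar c_neq0) /=.
by case: (mulM p q) => //= pq; rewrite nzmulA.
Qed.

Lemma lin_scale_mulr c u v : lin_scale c (lin_mul u v) = lin_mul u (lin_scale c v).
Proof.
have [->|c_neq0] := eqVneq c 0; first by rewrite !lin_scale0 lin_mul0r.
case: u => [[a p]|] //; case: v => [[b q]|]; rewrite ?lin_mul0r //.
rewrite /lin_scale /lin_mul (insub_nzscalar c_neq0) /=.
case: (mulM p q) => //= pq; congr (Some (_, _)).
by apply: val_inj; rewrite /= mulrCA.
Qed.

Definition linearization : ksemigroup K :=
  KSemigroup lin_mulA lin_mul0l lin_mul0r lin_scaleA lin_scale1
    lin_scale_mull lin_scale_mulr lin_scale0.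

Lemma linearization_cancellative : kcancellative linearization.
Proof.
move=> a b [[c p]|] //= + _.
have [->|a_neq0] := eqVneq a 0; have [->|b_neq0] := eqVneq b 0 => //.
- by rewrite insubF ?eqxx // (insub_nzscalar b_neq0).
- by rewrite (insub_nzscalar a_neq0) insubF ?eqxx.
- by rewrite !insub_nzscalar => -[]; apply/mulIf/(valP c).
Qed.

Definition lin_lift (u : option M) : linearization := omap (pair nzone) u.

Lemma lin_lift_mul u v : smul (lin_lift u) (lin_lift v) = lin_lift (omul u v).
Proof.
case: u v => [p|] [q|] //; rewrite /= /lin_mul /omul.
case: (mulM p q) => //= pq.
by congr (Some (_, _)); apply: val_inj; rewrite /= mulr1.
Qed.

End Linearization.

Section CellSemigroup.
Variables (G : groupoid) (K : fieldType) (sigma : G -> G -> K).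
Local Open Scope classical_set_scope.

Definition dom_triangle (a b c : G) : Prop :=
  [/\ gr a = gr b, gr b = gr c & in_dom sigma (gmul (ginv a) b) (gmul (ginv b) c)].

Definition consistent (A : set G) : Prop :=
  forall a b c, A a -> A b -> A c -> dom_triangle a b c.

Lemma consistent_sub (A B : set G) : A `<=` B -> consistent B -> consistent A.
Proof. by move=> AB consB a b c /AB Ba /AB Bb /AB Bc; apply: consB. Qed.

Lemma dom_triangle_translate g a b c :
  composable g a -> composable g b -> composable g c ->
  dom_triangle (gmul g a) (gmul g b) (gmul g c) -> dom_triangle a b c.
Proof.
move=> ga gb gc [_ _]; rewrite !ldiv_gmul2l // => D.
by split=> //; [rewrite -ga -gb | rewrite -gb -gc].
Qed.

Lemma consistent_translate g (B : set G) : (forall b, B b -> composable g b) ->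
  consistent (gmul g @` B) -> consistent B.
Proof.
move=> gB consB a b c Ba Bb Bc.
apply: (dom_triangle_translate (gB _ Ba) (gB _ Bb) (gB _ Bc)).
by apply: consB; [exists a | exists b | exists c].
Qed.

Definition cell := (set G * G)%type.

Definition fibered (c : cell) : Prop := forall a, c.1 a -> gr a = gr c.2.

Definition cmul (c d : cell) : cell := (c.1 `|` gmul c.2 @` d.1, gmul c.2 d.2).

Definition ccomposable (c d : cell) : Prop :=
  [/\ composable c.2 d.2, fibered c & fibered d].

Lemma composable_translate c d : ccomposable c d -> forall b, d.1 b -> composable c.2 b.
Proof. by case=> cd _ fd b /fd; rewrite /composable cd => ->. Qed.

Lemma fibered_cmul c d : ccomposable c d -> fibered (cmul c d).
Proof.
move=> cd; have [c_d fc _] := cd; move=> z /= [/fc ->|[b db <-]].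
  by rewrite gr_gmul.
by rewrite !gr_gmul //; apply: composable_translate cd _ db.
Qed.

Lemma ccomposable_mull c d e :
  ccomposable c d -> ccomposable (cmul c d) e <-> ccomposable d e.
Proof.
move=> cd; have fcd := fibered_cmul cd; have [c_d _ fd] := cd.
by rewrite /ccomposable /= composable_mull //; split=> -[].
Qed.

Lemma ccomposable_mulr c d e :
  ccomposable d e -> ccomposable c (cmul d e) <-> ccomposable c d.
Proof.
move=> de; have fde := fibered_cmul de; have [d_e fd _] := de.
by rewrite /ccomposable /= composable_mulr //; split=> -[].
Qed.

Lemma cmulA c d e : ccomposable c d -> ccomposable d e ->
  cmul (cmul c d) e = cmul c (cmul d e).
Proof.
move=> cd de; have [c_d _ _] := cd; have [d_e _ _] := de.
rewrite /cmul /= gmulA // image_setU setUA image_comp; congr (_ `|` _, _).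
apply: eq_imagel => z ez /=; apply: gmulA => //; exact: composable_translate de _ ez.
Qed.

Lemma consistent_cmul c d : ccomposable c d -> consistent (cmul c d).1 ->
  consistent c.1 /\ consistent d.1.
Proof.
move=> cd cons_cd; split; first by apply: consistent_sub cons_cd => z cz; left.
apply: (consistent_translate (composable_translate cd)).
by apply: consistent_sub cons_cd => z dz; right.
Qed.

Definition trunc (c : cell) : option cell :=
  if pselect (consistent c.1) then Some c else None.

(* Non-fibered cells are junk: they multiply to 0. *)
Definition cell_mul (c d : cell) : option cell :=
  if pselect (ccomposable c d) then trunc (cmul c d) else None.

Lemma cell_mulE c d : ccomposable c d -> cell_mul c d = trunc (cmul c d).
Proof. by rewrite /cell_mul; case: pselect. Qed.

Lemma omul_cell_mull c d e : omul cell_mul (cell_mul c d) (Some e) =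
  if pselect (ccomposable c d /\ ccomposable d e) then trunc (cmul (cmul c d) e) else None.
Proof.
rewrite [cell_mul c d]/cell_mul; case: (pselect (ccomposable c d)) => [cd|ncd]; last first.
  by case: (pselect (_ /\ _)) => // -[].
have cd_e := ccomposable_mull e cd.
rewrite [trunc (cmul c d)]/trunc /omul; case: (pselect (consistent _)) => [cons|ncons] /=.
  rewrite /cell_mul; case: (pselect (ccomposable _ e)) => ?; case: pselect => ? //=; tauto.
case: (pselect (_ /\ _)) => [[_ de]|] //=; rewrite /trunc.
case: (pselect (consistent _)) => // cons; exfalso.
by apply: ncons; apply: (consistent_cmul _ cons).1; apply/cd_e.
Qed.

Lemma omul_cell_mulr c d e : omul cell_mul (Some c) (cell_mul d e) =
  if pselect (ccomposable c d /\ ccomposable d e) then trunc (cmul c (cmul d e)) else None.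
Proof.
rewrite [cell_mul d e]/cell_mul; case: (pselect (ccomposable d e)) => [de|nde]; last first.
  by case: (pselect (_ /\ _)) => // -[].
have c_de := ccomposable_mulr c de.
rewrite [trunc (cmul d e)]/trunc /omul; case: (pselect (consistent _)) => [cons|ncons] /=.
  rewrite /cell_mul; case: (pselect (ccomposable c _)) => ?; case: pselect => ? //=; tauto.
case: (pselect (_ /\ _)) => [[cd _]|] //=; rewrite /trunc.
case: (pselect (consistent _)) => // cons; exfalso.
by apply: ncons; apply: (consistent_cmul _ cons).2; apply/c_de.
Qed.

Lemma cell_mulA c d e :
  omul cell_mul (cell_mul c d) (Some e) = omul cell_mul (Some c) (cell_mul d e).
Proof.
rewrite omul_cell_mull omul_cell_mulr.
by case: pselect => // -[cd de]; rewrite cmulA.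
Qed.

Lemma omul_trunc c d : omul cell_mul (trunc c) (trunc d) = cell_mul c d.
Proof.
rewrite [trunc c]/trunc [trunc d]/trunc.
case: pselect => consc; case: pselect => consd //=.
all: rewrite /cell_mul; case: pselect => // cd; rewrite /trunc; case: pselect => // cons.
all: by exfalso; have [] := consistent_cmul cd cons.
Qed.

Definition cell_semigroup : ksemigroup K := linearization K cell_mulA.

Lemma lift_trunc_mul c d : ccomposable c d ->
  smul (lin_lift K cell_mulA (trunc c)) (lin_lift K cell_mulA (trunc d)) =
  lin_lift K cell_mulA (trunc (cmul c d)).
Proof. by move=> cd; rewrite lin_lift_mul omul_trunc cell_mulE. Qed.

End CellSemigroup.

Section Realization.
Variables (G : groupoid) (K : fieldType) (sigma : G -> G -> K).
Local Open Scope classical_set_scope.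
Local Notation T := (dom_triangle sigma).
Local Notation lift := (lin_lift K (@cell_mulA G K sigma)).

Definition gen (x : G) : cell G := ([set gr x; x], x).

Definition Gam (x : G) : cell_semigroup sigma := lift (trunc sigma (gen x)).

Lemma fibered_gen x : fibered (gen x).
Proof. by move=> a /= [->|->]; rewrite ?gr_gr. Qed.

Lemma ccomposable_gen (c : cell G) y :
  fibered c -> composable c.2 y -> ccomposable c (gen y).
Proof. by move=> fc cy; split=> //; apply: fibered_gen. Qed.

Lemma ccomposable_gens x y : composable x y -> ccomposable (gen x) (gen y).
Proof. exact: ccomposable_gen (@fibered_gen x). Qed.

Lemma cmul_gen (c : cell G) y : composable c.2 y ->
  cmul c (gen y) = (c.1 `|` [set c.2; gmul c.2 y], gmul c.2 y).
Proof. by move=> cy; rewrite /cmul /= image_setU !image_set1 gmul_grl. Qed.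

Lemma Gam_mul x y : composable x y ->
  smul (Gam x) (Gam y) = lift (trunc sigma (cmul (gen x) (gen y))).
Proof. by move=> xy; rewrite /Gam lift_trunc_mul //; apply: ccomposable_gens. Qed.

Lemma Gam_mul3 x y z : composable x y -> composable y z ->
  smul (smul (Gam x) (Gam y)) (Gam z) =
  lift (trunc sigma (cmul (cmul (gen x) (gen y)) (gen z))).
Proof.
move=> xy yz; rewrite Gam_mul // /Gam lift_trunc_mul //.
by apply: ccomposable_gen (fibered_cmul (ccomposable_gens xy)) _; rewrite /= composable_mull.
Qed.

Lemma Gam_ginvl_mul x y : composable x y ->
  smul (smul (Gam (ginv x)) (Gam x)) (Gam y) = smul (Gam (ginv x)) (Gam (gmul x y)).
Proof.
move=> xy; have x'x := composable_ginvl x.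
have x'x_y : composable (gmul (ginv x) x) y by rewrite composable_mull.
have x'_xy : composable (ginv x) (gmul x y) by rewrite composable_mulr.
rewrite Gam_mul3 // Gam_mul //; congr (lift (trunc _ _)).
rewrite !cmul_gen //= gr_ginv -/(gd x) gmulKg // xy gmul_gr; congr pair.
by apply/seteqP; split=> z /=; tauto.
Qed.

Lemma Gam_mul_ginvr x y : composable x y ->
  smul (smul (Gam x) (Gam y)) (Gam (ginv y)) = smul (Gam (gmul x y)) (Gam (ginv y)).
Proof.
move=> xy; have y_y' := composable_ginvr y.
have xy_y' : composable (gmul x y) (ginv y) by rewrite composable_mull.
rewrite Gam_mul3 // Gam_mul //; congr (lift (trunc _ _)).
rewrite !cmul_gen //= gmulgK // gr_gmul //; congr pair.
by apply/seteqP; split=> z /=; tauto.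
Qed.

Lemma Gam_gr x : smul (Gam (gr x)) (Gam x) = Gam x.
Proof.
have rx_x := composable_gr x.
rewrite Gam_mul // cmul_gen //= gr_gr gmul_gr.
by congr (lift (trunc _ (_, _))); apply/seteqP; split=> z /=; tauto.
Qed.

Lemma Gam_gd x : smul (Gam x) (Gam (gd x)) = Gam x.
Proof.
have x_dx := composable_gd x.
rewrite Gam_mul // cmul_gen //= gmul_gd.
by congr (lift (trunc _ (_, _))); apply/seteqP; split=> z /=; tauto.
Qed.

Lemma Gam_rep : partial_proj_rep Gam.
Proof.
move=> x y xy; split; exists 1; rewrite sscale1; split; try exact: oner_neq0.
- exact: Gam_ginvl_mul.
- exact: Gam_mul_ginvr.
Qed.

Lemma Gam_unit : standing_assumption Gam.
Proof. by move=> x; split; [apply: Gam_gr | apply: Gam_gd]. Qed.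

Section DomainClosed.
Hypothesis sigma_id : forall e : G, identity_elt e -> sigma e e = 1.
Hypothesis sigma_dom : dom_closed sigma.

Lemma dom_triangle_aaa a : T a a a.
Proof. by split=> //; rewrite -/(gd a) /in_dom sigma_id ?oner_neq0 //; exists a. Qed.

Lemma dom_triangle_acb a b c : T a b c -> T a c b.
Proof.
case=> ab bc /sigma_dom[_ [D _]]; split; [by rewrite ab | by [] |].
by rewrite gmul_ldiv // ginv_ldiv in D.
Qed.

Lemma dom_triangle_cba a b c : T a b c -> T c b a.
Proof.
case=> ab bc /sigma_dom[_ [_ [D _]]]; split=> //.
by rewrite !ginv_ldiv in D.
Qed.

Lemma dom_triangle_abb a b c : T a b c -> T a b b.
Proof.
case=> ab bc /sigma_dom[_ [_ [_ D]]]; split=> //.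
by rewrite gd_gmul ?composable_ginv_gr in D.
Qed.

Lemma dom_triangle_aac a b c : T a b c -> T a a c.
Proof.
by move=> /dom_triangle_cba/dom_triangle_acb/dom_triangle_abb/dom_triangle_cba.
Qed.

Lemma dom_triangle_aba a b c : T a b c -> T a b a.
Proof. by move=> /dom_triangle_acb/dom_triangle_aac/dom_triangle_acb. Qed.

Lemma consistent_triangle e x w : T e x w -> consistent sigma [set e; x; w].
Proof.
(* Each triple drawn from {e, x, w} is a permutation of (e, x, w) or repeats an entry. *)
move=> exw; have ewx := dom_triangle_acb exw; have wxe := dom_triangle_cba exw.
have wex := dom_triangle_acb wxe; have xwe := dom_triangle_cba ewx.
have xew := dom_triangle_acb xwe.
move=> a b c [[]|] -> [[]|] -> [[]|] ->; first [
  exact: dom_triangle_aaa | done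
| apply: dom_triangle_abb; eassumption
| apply: dom_triangle_aac; eassumption
| apply: dom_triangle_aba; eassumption ].
Qed.

Lemma consistent_gen_mul x y : composable x y ->
  consistent sigma (cmul (gen x) (gen y)).1 <-> in_dom sigma x y.
Proof.
move=> xy; rewrite cmul_gen //=.
have triangleE : T (gr x) x (gmul x y) <-> in_dom sigma x y.
  by rewrite /dom_triangle ginv_gr gmul_gr gmulKg // gr_gr gr_gmul //; split=> [[]|].
split=> [cons|/triangleE/consistent_triangle]; last first.
  by apply: consistent_sub => z /=; tauto.
by apply/triangleE; apply: cons => /=; tauto.
Qed.

Lemma Gam_mul_neq0 x y : composable x y ->
  smul (Gam x) (Gam y) <> szero _ <-> in_dom sigma x y.
Proof.
move=> xy; rewrite Gam_mul // -consistent_gen_mul // /trunc.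
by case: (pselect (consistent _ _)).
Qed.

Lemma Gam_factor_set : (forall x y, sigma x y = 0 \/ sigma x y = 1) ->
  factor_set_of Gam sigma.
Proof.
move=> sigma01; split=> [x y|x y xy /(Gam_mul_neq0 xy) D].
  split=> [D|[xy /(Gam_mul_neq0 xy) //]].
  by have [xy _] := sigma_dom D; split=> //; apply/Gam_mul_neq0.
have -> : sigma x y = 1 by case: (sigma01 x y) => // s0; move: D; rewrite /in_dom s0 eqxx.
by rewrite !sscale1 Gam_ginvl_mul // Gam_mul_ginvr.
Qed.

Lemma in_pm_of_dom_closed : (forall x y, sigma x y = 0 \/ sigma x y = 1) -> in_pm sigma.
Proof.
move=> sigma01; exists (cell_semigroup sigma), Gam.
split; first exact: linearization_cancellative.
by split; [apply: Gam_rep | split; [apply: Gam_unit | apply: Gam_factor_set]].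
Qed.

End DomainClosed.
End Realization.

Lemma idempotent_eq01 (K : fieldType) (a : K) : a * a = a -> a = 0 \/ a = 1.
Proof.
have [->|a_neq0] := eqVneq a 0; [by left | right].
by apply: (mulIf a_neq0); rewrite mul1r.
Qed.

Theorem mainTheorem11 (G : groupoid) (K : fieldType) (sigma : G -> G -> K)
  (Hid : forall e : G, identity_elt e -> sigma e e = 1) :
  idempotent_factor_set sigma <->
  ((forall x y : G, sigma x y = 0 \/ sigma x y = 1) /\
   (forall x y : G, in_dom sigma x y ->
      composable x y /\
      in_dom sigma (gmul x y) (ginv y) /\
      in_dom sigma (ginv y) (ginv x) /\
      in_dom sigma x (gd x))).
Proof.
split=> [[[S [Gm [_ [rep [std fs]]]]] idem] | [sigma01 dom]].
  split; first by move=> x y; apply: idempotent_eq01.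
  exact: factor_set_dom_closed fs.
split; first exact: in_pm_of_dom_closed.
by move=> x y; case: (sigma01 x y) => ->; rewrite ?mul0r ?mulr1.
Qed.
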